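(* Let $n$ be a positive integer. Every partition $x\in C_2(n)$ is either a Metropolis 2-partition of $n$ or an extension of some Metropolis 2-partition $y$ of some integer $m<n$.
   Context: A partition of $n$ is identified with a point $x=(x_1,\dots,x_n)\in\mathbb{Z}_{\ge 0}^n$ satisfying $x_1+2x_2+\dots+nx_n=n$, where $x_i$ is the number of parts equal to $i$. Let $P(n)$ be the set of partitions of $n$ and $P_n=\mathrm{conv}\,P(n)\subset\mathbb{R}^n$. $C_2(n)$ is the set of partitions $x\in P(n)$ that are not vertices of $P_n$ and can be written as $x=\lambda y+(1-\lambda)z$ with $y,z\in P(n)$ different from $x$ and $0<\lambda<1$. For an even positive integer $m$, a Metropolis 2-partition of $m$ is a partition of $m$ obtained by joining (taking the multiset union of the parts of) two, not necessarily different, partitions of $m/2$. A partition $x$ of $n$ is an extension of a partition $y$ of $m<n$ if every part of $y$ is a part of $x$. *)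

From HB Require Import structures.
From mathcomp Require Import all_boot all_order all_algebra.
Unset Printing Implicit Defensive.
Import Order.TTheory GRing.Theory Num.Theory.

(* A partition of n is a multiplicity function x : nat -> nat, where x i is the
   number of parts equal to i; it is supported on {1,..,n} and
   x 1 + 2 x 2 + ... + n x n = n. *)
Definition is_partition (n : nat) (x : nat -> nat) : Prop :=
  (forall i, x i != 0%N -> (1 <= i <= n)%N) /\
  (\sum_(1 <= i < n.+1) i * x i)%N = n.

Local Open Scope ring_scope.

(* the point (x_1,...,x_n) of R^n; coordinate j : 'I_n is x_(j+1) *)
Definition ptn_vec (R : realFieldType) (n : nat) (x : nat -> nat) : 'I_n -> R :=
  fun j => (x j.+1)%:R.

Definition in_Pn (R : realFieldType) (n : nat) (p : 'I_n -> R) : Prop :=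
  exists (k : nat) (c : 'I_k -> R) (y : 'I_k -> nat -> nat),
    (forall t, 0 <= c t) /\ \sum_(t < k) c t = 1 /\
    (forall t, is_partition n (y t)) /\
    (forall j, p j = \sum_(t < k) c t * ptn_vec R n (y t) j).

Definition is_vertex_Pn (R : realFieldType) (n : nat) (p : 'I_n -> R) : Prop :=
  in_Pn R n p /\
  ~ (exists (a b : 'I_n -> R) (l : R),
        in_Pn R n a /\ in_Pn R n b /\ a <> b /\ 0 < l < 1 /\
        (forall j, p j = l * a j + (1 - l) * b j)).

Definition in_C2 (R : realFieldType) (n : nat) (x : nat -> nat) : Prop :=
  is_partition n x /\ ~ is_vertex_Pn R n (ptn_vec R n x) /\
  exists (y z : nat -> nat) (l : R),
    is_partition n y /\ is_partition n z /\ y <> x /\ z <> x /\ 0 < l < 1 /\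
    (forall j, ptn_vec R n x j = l * ptn_vec R n y j + (1 - l) * ptn_vec R n z j).

Definition metropolis2 (m : nat) (x : nat -> nat) : Prop :=
  (0 < m)%N /\ ~~ odd m /\
  exists y z, is_partition m./2 y /\ is_partition m./2 z /\
              (forall i, x i = y i + z i)%N.

Definition extension (n m : nat) (x y : nat -> nat) : Prop :=
  is_partition n x /\ is_partition m y /\ (m < n)%N /\
  (forall i, y i <= x i)%N.

(* Write x = l y + (1 - l) z with y, z partitions of n different from x.  If
   l <= 1/2 then x_i >= (1 - l) z_i >= z_i / 2 for every i, and symmetrically
   for y if l >= 1/2; so some partition u <> x of n satisfies u_i <= 2 x_i.
   The parts (u_i - x_i)^+ and (x_i - u_i)^+ then form two partitions of the
   same integer k > 0, whose union is a Metropolis 2-partition of 2k lying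
   below x: since |u_i - x_i| <= x_i, every one of its parts is a part of x. *)
From Stdlib Require Import FunctionalExtensionality.
From mathcomp Require Import all_boot all_order all_algebra zify ring lra.
Import Order.TTheory GRing.Theory Num.Theory.

Set Implicit Arguments.
Unset Strict Implicit.

Definition ptn_weight (N : nat) (F : nat -> nat) : nat :=
  \sum_(1 <= i < N.+1) i * F i.

Definition supported_in (N : nat) (F : nat -> nat) : Prop :=
  forall i, F i != 0 -> 1 <= i <= N.

Lemma partition_supported n x : is_partition n x -> supported_in n x.
Proof. by case. Qed.

Lemma partition_eq0 n x i :
  is_partition n x -> i \notin index_iota 1 n.+1 -> x i = 0.
Proof.
move=> [xS _]; rewrite mem_index_iota => iNn.
by apply/eqP/negPn/negP => /xS; lia.
Qed.

Lemma supported_le N F G :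
  supported_in N G -> (forall i, F i <= G i) -> supported_in N F.
Proof. by move=> GS FG i Fi; apply: GS; move: (FG i) Fi; lia. Qed.

Lemma ptn_weight_widen N K F :
  supported_in N F -> N <= K -> ptn_weight K F = ptn_weight N F.
Proof.
move=> FS NK; rewrite /ptn_weight (@big_cat_nat _ _ _ N.+1) ?ltnS //=.
rewrite [X in _ + X]big1_seq ?addn0 // => i /andP[_].
rewrite mem_index_iota => /andP[iN _].
by have [->|/FS] := eqVneq (F i) 0; [rewrite muln0 | lia].
Qed.

Lemma ptn_weight_supported N K F :
  supported_in N F -> supported_in K F -> ptn_weight N F = ptn_weight K F.
Proof.
move=> FN FK.
by rewrite -(ptn_weight_widen FN (leq_maxl N K)) (ptn_weight_widen FK (leq_maxr N K)).
Qed.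

Lemma ptn_weight_partition N F :
  supported_in N F -> is_partition (ptn_weight N F) F.
Proof.
move=> FN.
have Fw : supported_in (ptn_weight N F) F.
  move=> i Fi; have /andP[i1 iN] := FN i Fi; rewrite i1 /=.
  have iI : i \in index_iota 1 N.+1 by rewrite mem_index_iota; lia.
  rewrite /ptn_weight (big_rem i iI) /=.
  by apply: leq_trans (leq_addr _ _); rewrite leq_pmulr ?lt0n.
by split; rewrite // -/(ptn_weight _ F) (ptn_weight_supported Fw FN).
Qed.

Lemma partition_ptn_weight N m F :
  is_partition m F -> supported_in N F -> ptn_weight N F = m.
Proof. by move=> [Fm wF] FN; rewrite (ptn_weight_supported FN Fm). Qed.

Lemma ptn_weightD N F G :
  ptn_weight N (fun i => F i + G i) = ptn_weight N F + ptn_weight N G.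
Proof. by rewrite /ptn_weight -big_split; apply: eq_bigr => i _; rewrite mulnDr. Qed.

Lemma ptn_weight_eq0 N F :
  ptn_weight N F = 0 -> {in index_iota 1 N.+1, forall i, F i = 0}.
Proof.
move=> /eqP; rewrite sum_nat_seq_eq0 => /allP F0 i iI.
move: iI (F0 i iI); rewrite mem_index_iota muln_eq0 /=; lia.
Qed.

Lemma ptn_weight_le N F G :
  (forall i, F i <= G i) -> ptn_weight N F <= ptn_weight N G.
Proof. by move=> FG; apply: leq_sum => i _; rewrite leq_mul2l FG orbT. Qed.

Lemma ptn_weight_subnC N F G :
  ptn_weight N F = ptn_weight N G ->
  ptn_weight N (fun i => F i - G i) = ptn_weight N (fun i => G i - F i).
Proof.
move=> wFG; apply: (@addnI (ptn_weight N G)).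
rewrite -ptn_weightD -[in RHS]wFG -ptn_weightD.
by congr ptn_weight; apply: functional_extensionality => i; rewrite -!maxnE maxnC.
Qed.

Lemma partition_le_eq n m x y :
  is_partition n x -> is_partition m y -> (forall i, y i <= x i) ->
  m < n \/ m = n /\ y = x.
Proof.
move=> xn ym yx; have yS := supported_le (partition_supported xn) yx.
have wy := partition_ptn_weight ym yS.
have [mn|] := ltnP m n; [by left | rewrite leq_eqVlt => /orP[/eqP nm|]]; last first.
  by rewrite -(proj2 xn) -wy ltnNge ptn_weight_le.
right; split=> //; apply: functional_extensionality => i.
have [iI|iNI] := boolP (i \in index_iota 1 n.+1); last first.
  by move: (yx i); rewrite (partition_eq0 xn iNI) leqn0 => /eqP.
have wdiff : ptn_weight n (fun i => x i - y i) = 0.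
  apply: (@addnI (ptn_weight n y)); rewrite -ptn_weightD addn0 wy -nm.
  have -> : (fun i => y i + (x i - y i)) = x.
    by apply: functional_extensionality => j; rewrite subnKC.
  exact: (proj2 xn).
by move: (ptn_weight_eq0 wdiff iI) (yx i); lia.
Qed.

Section DoublyBounded.

Variables (n : nat) (x u : nat -> nat).
Hypotheses (xn : is_partition n x) (un : is_partition n u) (ux : u <> x).
Hypothesis u_le2x : forall i, u i <= (x i).*2.

Let dist i := (u i - x i) + (x i - u i).
Let k := ptn_weight n (fun i => u i - x i).

Lemma excess_deficit_weight : ptn_weight n (fun i => x i - u i) = k.
Proof.
have wx : ptn_weight n x = n := proj2 xn.
have wu : ptn_weight n u = n := proj2 un.
by rewrite /k ptn_weight_subnC // wx wu.
Qed.

Lemma excess_weight_gt0 : 0 < k.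
Proof.
rewrite lt0n; apply/eqP => k0; apply: ux; apply: functional_extensionality => i.
have [iI|iNI] := boolP (i \in index_iota 1 n.+1); last by rewrite !(partition_eq0 _ iNI).
have := ptn_weight_eq0 k0 iI.
have := ptn_weight_eq0 (etrans excess_deficit_weight k0) iI.
lia.
Qed.

Lemma dist_le : forall i, dist i <= x i.
Proof. by move=> i; move: (u_le2x i); rewrite /dist; lia. Qed.

Lemma dist_supported : supported_in n dist.
Proof. exact: supported_le (partition_supported xn) dist_le. Qed.

Lemma metropolis2_dist : metropolis2 (k + k) dist.
Proof.
have excS : supported_in n (fun i => u i - x i).
  by apply: supported_le (partition_supported un) _ => i; apply: leq_subr.
have defS : supported_in n (fun i => x i - u i).
  by apply: supported_le (partition_supported xn) _ => i; apply: leq_subr.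
split; first by rewrite addn_gt0 excess_weight_gt0.
split; first by rewrite addnn odd_double.
exists (fun i => u i - x i), (fun i => x i - u i); rewrite addnn half_double.
split; first exact: ptn_weight_partition.
by split; rewrite // -excess_deficit_weight; apply: ptn_weight_partition.
Qed.

Lemma partition_dist : is_partition (k + k) dist.
Proof.
have -> : k + k = ptn_weight n dist by rewrite /dist ptn_weightD excess_deficit_weight.
exact: ptn_weight_partition dist_supported.
Qed.

Lemma metropolis2_below_doubly_bounded :
  exists m y, [/\ metropolis2 m y, is_partition m y & forall i, y i <= x i].
Proof.
by exists (k + k), dist; split; [exact: metropolis2_dist | exact: partition_dist | exact: dist_le].
Qed.

End DoublyBounded.

Local Open Scope ring_scope.

Lemma leq_double_convex (R : realFieldType) (l : R) (a b c : nat) :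
  0 <= l -> l * 2 <= 1 -> c%:R = l * a%:R + (1 - l) * b%:R -> (b <= c.*2)%N.
Proof.
move=> l0 l2 cE; rewrite -(ler_nat R) -muln2 natrM cE.
have la : 0 <= l * a%:R by rewrite mulr_ge0.
have lb : 0 <= (1 - l * 2) * b%:R by rewrite mulr_ge0 ?subr_ge0.
lra.
Qed.

Lemma in_C2_doubly_bounded (R : realFieldType) n x :
  in_C2 R n x ->
  exists u, [/\ is_partition n u, u <> x & forall i, (u i <= (x i).*2)%N].
Proof.
move=> [xn [_ [y [z [l [yn [zn [yx [zx [/andP[l0 l1] xE]]]]]]]]]].
have coordE i : (x i)%:R = l * (y i)%:R + (1 - l) * (z i)%:R :> R.
  have [iI|iNI] := boolP (i \in index_iota 1 n.+1); last first.
    by rewrite !(partition_eq0 _ iNI) // !mulr0 addr0.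
  move: iI; rewrite mem_index_iota => /andP[i0 iSn].
  have i1 : (i.-1 < n)%N by lia.
  by have := xE (Ordinal i1); rewrite /ptn_vec /= prednK.
have [l2|l2] := lerP (l * 2) 1.
  by exists z; split=> // i; exact: leq_double_convex (ltW l0) l2 (coordE i).
exists y; split=> // i.
by apply: (@leq_double_convex R (1 - l) (z i)); [lra | lra | rewrite coordE; ring].
Qed.

Theorem theorem5 (R : realFieldType) (n : nat) (x : nat -> nat) :
  (0 < n)%N -> in_C2 R n x ->
  metropolis2 n x \/
  (exists (m : nat) (y : nat -> nat), metropolis2 m y /\ extension n m x y).
Proof.
move=> _ xC2; have xn := proj1 xC2.
have [u [un ux u_le2x]] := in_C2_doubly_bounded xC2.
have [m [y [my ym yx]]] := metropolis2_below_doubly_bounded xn un ux u_le2x.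
have [mn|[<- <-]] := partition_le_eq xn ym yx; last by left.
by right; exists m, y.
Qed.
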